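(* Let $A$ be the $8$-dimensional Hopf algebra of the context and $\tau$ a Hopf automorphism of $A$, identified with the matrix $\begin{pmatrix}a&b\\c&d\end{pmatrix}$ by $\tau(x)=ax+by$, $\tau(y)=cx+dy$ (and $\tau(g)=g$). (1) If $\tau^2=1$ and $m$ is a positive even integer, then $\nu_{m,\tau}(A)=\frac{m^2}{2}\big(1+\det(\tau)\big)$; consequently $\nu_{m,\tau}(A)=m^2$ if $\det(\tau)=1$ and $\nu_{m,\tau}(A)=0$ if $\det(\tau)=-1$. (2) If $\tau^3=1$, then $\nu_{3,\tau}(A)=(\mathrm{Tr}(\tau)+\det(\tau))^2+(\mathrm{Tr}(\tau)+1)(1-\det(\tau))$; consequently $\nu_{3,\tau}(A)=9$ if $\tau=\mathrm{id}$ and $\nu_{3,\tau}(A)=0$ if $\tau\neq\mathrm{id}$.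
   Context: $k$ is algebraically closed of characteristic $0$. $A=k\langle g,x,y\mid gx=-xg,\ gy=-yg,\ xy=-yx,\ g^2=1,\ x^2=y^2=0\rangle$ with $g$ grouplike, $\Delta(x)=x\otimes g+1\otimes x$, $\Delta(y)=y\otimes g+1\otimes y$, $\varepsilon(x)=\varepsilon(y)=0$, $S(g)=g$, $S(x)=gx$, $S(y)=gy$. Every Hopf automorphism of $A$ fixes $g$ and acts linearly and invertibly on $\mathrm{span}(x,y)$. For a Hopf automorphism $\tau$ whose order divides $m$, define $P_{m-1,\tau}(h)=\sum(\tau^{m-1}\cdot h_1)(\tau^{m-2}\cdot h_2)\cdots(\tau\cdot h_{m-1})$ (Sweedler notation) and the twisted Frobenius–Schur indicator $\nu_{m,\tau}(A)=\mathrm{Tr}(S\circ P_{m-1,\tau})$, the trace of the linear map $S\circ P_{m-1,\tau}:A\to A$. $\mathrm{Tr}(\tau)=a+d$ and $\det(\tau)=ad-bc$. *)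

From HB Require Import structures.
From mathcomp Require Import all_boot all_order all_algebra.
Set Implicit Arguments. Unset Strict Implicit. Unset Printing Implicit Defensive.
Import Order.TTheory GRing.Theory Num.Theory.
Local Open Scope ring_scope.

(* The 8-dimensional Hopf algebra
   A = k<g,x,y | gx=-xg, gy=-yg, xy=-yx, g^2=1, x^2=y^2=0>
   is modelled on its PBW basis  g^i x^a y^b  (i,a,b in {0,1}),
   indexed by [idx] = bool * bool * bool. *)

Notation idx := (bool * bool * bool)%type.

Section Hopf.
Variable k : fieldType.

Local Notation Alg := {ffun idx -> k}.
Local Notation Alg2 := {ffun (idx * idx) -> k}.

Definition sc (I : finType) (c : k) (f : {ffun I -> k}) : {ffun I -> k} :=
  [ffun s => c * f s].
Local Notation "c *s f" := (sc c f) (at level 40).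

Definition bas (t : idx) : Alg := [ffun s => (s == t)%:R].

(* product of basis vectors:
   g^i x^a y^b . g^j x^c y^d = (-1)^((a+b)j + bc) g^(i+j) x^(a+c) y^(b+d),
   which is 0 when a = c = 1 or b = d = 1 (x^2 = y^2 = 0). *)
Definition bmul (s t : idx) : Alg :=
  let: (i, a, b) := s in
  let: (j, c, d) := t in
  if (a && c) || (b && d) then 0
  else (-1 : k) ^+ ((a + b) * j + b * c)%N *s bas (i (+) j, a || c, b || d).

Definition mulA (u v : Alg) : Alg :=
  \sum_(s : idx) \sum_(t : idx) (u s * v t) *s bmul s t.

Definition oneA : Alg := bas (false, false, false).
Definition gA : Alg := bas (true, false, false).
Definition xA : Alg := bas (false, true, false).
Definition yA : Alg := bas (false, false, true).

Definition powA (u : Alg) (n : nat) : Alg := iter n (mulA u) oneA.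

Definition tens (u v : Alg) : Alg2 := [ffun p => u p.1 * v p.2].

Definition mul2 (U V : Alg2) : Alg2 :=
  \sum_(p : idx * idx) \sum_(q : idx * idx)
     (U p * V q) *s tens (bmul p.1 q.1) (bmul p.2 q.2).

Definition one2 : Alg2 := tens oneA oneA.
Definition pow2 (U : Alg2) (n : nat) : Alg2 := iter n (mul2 U) one2.

Definition DeltaB (t : idx) : Alg2 :=
  let: (i, a, b) := t in
  mul2 (mul2 (pow2 (tens gA gA) i) (pow2 (tens xA gA + tens oneA xA) a))
       (pow2 (tens yA gA + tens oneA yA) b).

Definition Delta (u : Alg) : Alg2 := \sum_(t : idx) u t *s DeltaB t.

(* Counit: the algebra map with eps(g) = 1, eps(x) = eps(y) = 0,
   i.e. eps(g^i x^a y^b) = 1 if a = b = 0 and 0 otherwise. *)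
Definition epsA (u : Alg) : k := u (false, false, false) + u (true, false, false).

(* Antipode: the anti-algebra map with S(g) = g, S(x) = gx, S(y) = gy,
   so S(g^i x^a y^b) = S(y)^b S(x)^a S(g)^i. *)
Definition SB (t : idx) : Alg :=
  let: (i, a, b) := t in
  mulA (mulA (powA (mulA gA yA) b) (powA (mulA gA xA) a)) (powA gA i).

Definition SA (u : Alg) : Alg := \sum_(t : idx) u t *s SB t.

Definition tauB (T : 'M[k]_2) (t : idx) : Alg :=
  let: (i, a, b) := t in
  mulA (mulA (powA gA i) (powA (T 0 0 *s xA + T 0 1 *s yA) a))
       (powA (T 1 0 *s xA + T 1 1 *s yA) b).

Definition tauA (T : 'M[k]_2) (u : Alg) : Alg := \sum_(t : idx) u t *s tauB T t.

Definition tauPow (T : 'M[k]_2) (n : nat) (u : Alg) : Alg := iter n (tauA T) u.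

(* P_{n,tau}(h) = sum (tau^n h_1)(tau^(n-1) h_2) ... (tau h_n), defined
   through the (coassociative) iterated coproduct:
   P_0(h) = eps(h) 1,  P_{n+1}(h) = sum (tau^(n+1) h_1) P_n(h_2). *)
Fixpoint Ptau (T : 'M[k]_2) (n : nat) (h : Alg) : Alg :=
  match n with
  | 0 => epsA h *s oneA
  | n'.+1 => \sum_(p : idx * idx)
               Delta h p *s mulA (tauPow T n'.+1 (bas p.1)) (Ptau T n' (bas p.2))
  end.

Definition traceA (f : Alg -> Alg) : k := \sum_(t : idx) f (bas t) t.

Definition nu (m : nat) (T : 'M[k]_2) : k :=
  traceA (fun h => SA (Ptau T m.-1 h)).

End Hopf.

(* The algebra A has the basis g^i x^a y^b, and every map involved is linear, so
   everything is computed in coordinates; the coproduct of a basis element is an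
   explicit sum of at most four tensors.  If tau^2 = 1 then tau^(2n+1) = tau, and
   P_{2n,tau}, P_{2n+1,tau} have closed forms on the basis, polynomial in n, which
   are proved by induction; the trace of S o P_{m-1,tau} is then read off.  For
   m = 3, P_{2,tau} is computed directly for an arbitrary tau.  Finally tau acts on
   span(x, y) by the matrix T, so tau^3 = 1 forces T^3 = 1.  By Cayley-Hamilton
   T^3 = (tr^2 - det) T - tr det, hence either tr^2 = det and tr det = -1, or T is
   scalar, and then a primitive cube root of unity when T <> 1; in both cases
   nu_3 vanishes. *)

From Pilot Require Import Defs.
From HB Require Import structures.
From mathcomp Require Import all_boot all_order all_algebra.
From mathcomp Require Import ring.
Import Order.TTheory GRing.Theory Num.Theory.
Local Open Scope ring_scope.
Set Implicit Arguments. Unset Strict Implicit. Unset Printing Implicit Defensive.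

(* fraction.v exports a lemma named [mulA]. *)
Local Notation mulA := Defs.mulA.

Lemma det_mx2 (R : comNzRingType) (T : 'M[R]_2) : \det T = T 0 0 * T 1 1 - T 0 1 * T 1 0.
Proof.
rewrite (expand_det_row T 0) !big_ord_recl big_ord0 /cofactor !det_mx11 !mxE /=.
rewrite addr0 expr0 expr1 mul1r mulN1r mulrN.
by congr (_ * T _ _ - T _ _ * T _ _); apply: val_inj.
Qed.

Lemma mxtrace_mx2 (R : comNzRingType) (T : 'M[R]_2) : \tr T = T 0 0 + T 1 1.
Proof.
rewrite /mxtrace !big_ord_recl big_ord0 addr0.
by congr (_ + T _ _); apply: val_inj.
Qed.

Lemma ord2P (i : 'I_2) : i = 0 \/ i = 1.
Proof. by case: i => -[|[|//]] ?; [left | right]; apply: val_inj. Qed.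

Lemma big_ord2 (V : nmodType) (F : 'I_2 -> V) : \sum_(i < 2) F i = F 0 + F 1.
Proof. by rewrite !big_ord_recl big_ord0 addr0; congr (_ + F _); apply: val_inj. Qed.

(* Cayley-Hamilton, applied twice. *)
Lemma mx2_cube (R : comNzRingType) (T : 'M[R]_2) :
  T ^+ 3 = (\tr T ^+ 2 - \det T) *: T - (\tr T * \det T)%:M.
Proof.
apply/matrixP => i j; rewrite !exprS expr0 mulr1 det_mx2 mxtrace_mx2 !mxE !big_ord2 !mxE !big_ord2.
by case: (ord2P i) => ->; case: (ord2P j) => ->; rewrite /= ?mulr0n ?mulr1n; ring.
Qed.

Lemma mx2_cube1_neq1 (F : fieldType) (T : 'M[F]_2) :
  T ^+ 3 = 1 -> T != 1 -> (\tr T + \det T) ^+ 2 + (\tr T + 1) * (1 - \det T) = 0.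
Proof.
rewrite mx2_cube mxtrace_mx2 det_mx2 => /matrixP T3 T_neq1.
set a := T 0 0; set b := T 0 1; set c := T 1 0; set d := T 1 1.
set s := (a + d) ^+ 2 - (a * d - b * c); set e := (a + d) * (a * d - b * c).
have Ea : s * a - e = 1 by have := T3 0 0; rewrite !mxE.
have Eb : s * b = 0 by have := T3 0 1; rewrite !mxE /= subr0.
have Ec : s * c = 0 by have := T3 1 0; rewrite !mxE /= subr0.
have Ed : s * d - e = 1 by have := T3 1 1; rewrite !mxE.
have [s0 | s_neq0] := eqVneq s 0.
  have e1 : e + 1 = 0 by rewrite -Ea s0 mul0r; ring.
  have -> : (a + d + (a * d - b * c)) ^+ 2 + (a + d + 1) * (1 - (a * d - b * c)) =
            (a + d + 1) * (e + 1) + (1 - (a * d - b * c)) * s by rewrite /s /e; ring.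
  by rewrite e1 s0 !mulr0 addr0.
(* Otherwise T is the scalar matrix a, with a^3 = 1 and a != 1. *)
have b0 : b = 0 by apply: (mulfI s_neq0); rewrite Eb mulr0.
have c0 : c = 0 by apply: (mulfI s_neq0); rewrite Ec mulr0.
have da : d = a by apply: (mulfI s_neq0); apply: (addIr (- e)); rewrite Ea Ed.
have a3 : a ^+ 3 = 1 by rewrite -Ea /s /e b0 c0 da; ring.
have a_neq1 : a != 1.
  apply: contraNneq T_neq1 => a1; apply/eqP/matrixP => i j; rewrite !mxE.
  case: (ord2P i) => ->; case: (ord2P j) => ->; rewrite /= ?mulr1n ?mulr0n;
    [rewrite -/a | rewrite -/b | rewrite -/c | rewrite -/d]; by rewrite ?b0 ?c0 ?da ?a1.
have cyclo : a ^+ 2 + a + 1 = 0.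
  have a1_neq0 : a - 1 != 0 by rewrite subr_eq0.
  apply: (mulfI a1_neq0); rewrite mulr0.
  have -> : (a - 1) * (a ^+ 2 + a + 1) = a ^+ 3 - 1 by ring.
  by rewrite a3 subrr.
rewrite b0 c0 da.
have -> : (a + a + (a * a - 0 * 0)) ^+ 2 + (a + a + 1) * (1 - (a * a - 0 * 0)) =
          (a ^+ 2 + a + 1) ^+ 2 by ring.
by rewrite cyclo expr0n.
Qed.

Lemma big_idx (V : nmodType) (F : idx -> V) :
  \sum_(t : idx) F t =
    F (true, true, true) + F (true, true, false)
    + (F (true, false, true) + F (true, false, false))
  + (F (false, true, true) + F (false, true, false)
    + (F (false, false, true) + F (false, false, false))).
Proof.
have pairE (I J : finType) (G : I * J -> V) :
    \sum_(p : I * J) G p = \sum_(i : I) \sum_(j : J) G (i, j).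
  by rewrite pair_bigA; apply: eq_bigr => -[].
by rewrite 2!pairE !big_bool.
Qed.

Section ScaledSums.
Variable k : fieldType.

Lemma scE (I : finType) (c : k) (f : {ffun I -> k}) i : sc c f i = c * f i.
Proof. by rewrite ffunE. Qed.

Lemma sc1 (I : finType) (f : {ffun I -> k}) : sc 1 f = f.
Proof. by apply/ffunP => i; rewrite !ffunE mul1r. Qed.

Lemma sc0 (I : finType) (f : {ffun I -> k}) : sc 0 f = 0.
Proof. by apply/ffunP => i; rewrite !ffunE mul0r. Qed.

Lemma scr0 (I : finType) (c : k) : sc c (0 : {ffun I -> k}) = 0.
Proof. by apply/ffunP => i; rewrite !ffunE mulr0. Qed.

Lemma scA (I : finType) (c d : k) (f : {ffun I -> k}) : sc c (sc d f) = sc (c * d) f.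
Proof. by apply/ffunP => i; rewrite !ffunE mulrA. Qed.

Lemma scDr (I : finType) (c : k) (f g : {ffun I -> k}) : sc c (f + g) = sc c f + sc c g.
Proof. by apply/ffunP => i; rewrite !ffunE mulrDr. Qed.

Lemma big_sc_single (I J : finType) (i0 : I) (c : I -> k) (G : I -> {ffun J -> k}) :
  (forall i, i != i0 -> c i = 0) -> \sum_i sc (c i) (G i) = sc (c i0) (G i0).
Proof.
by move=> c0; rewrite (bigD1 i0) //= big1 ?addr0 // => i /c0 ->; rewrite sc0.
Qed.

Lemma big_sc_single2 (I J : finType) (i0 j0 : I) (u v : I -> k) (G : I -> I -> {ffun J -> k}) :
    (forall i, i != i0 -> u i = 0) -> (forall j, j != j0 -> v j = 0) ->
  \sum_i \sum_j sc (u i * v j) (G i j) = sc (u i0 * v j0) (G i0 j0).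
Proof.
move=> u0 v0; rewrite (bigD1 i0) //= (big_sc_single (i0 := j0)) => [|j /v0 ->]; last by rewrite mulr0.
by rewrite big1 ?addr0 // => i /u0 ->; apply: big1 => j _; rewrite mul0r sc0.
Qed.

End ScaledSums.

Section Coordinates.
Variable k : fieldType.
Local Notation Alg := {ffun idx -> k}.

(* Coordinates in the basis 1, y, x, xy, g, gy, gx, gxy. *)
Definition pbw (e0 e1 e2 e3 e4 e5 e6 e7 : k) : Alg :=
  [ffun t : idx => match t with
   | (false, false, false) => e0 | (false, false, true) => e1
   | (false, true, false) => e2 | (false, true, true) => e3
   | (true, false, false) => e4 | (true, false, true) => e5
   | (true, true, false) => e6 | (true, true, true) => e7 end].

Lemma pbwD (e0 e1 e2 e3 e4 e5 e6 e7 f0 f1 f2 f3 f4 f5 f6 f7 : k) :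
  pbw e0 e1 e2 e3 e4 e5 e6 e7 + pbw f0 f1 f2 f3 f4 f5 f6 f7 =
  pbw (e0 + f0) (e1 + f1) (e2 + f2) (e3 + f3) (e4 + f4) (e5 + f5) (e6 + f6) (e7 + f7).
Proof. by apply/ffunP => -[[[] []] []]; rewrite !ffunE. Qed.

Lemma pbwB (e0 e1 e2 e3 e4 e5 e6 e7 f0 f1 f2 f3 f4 f5 f6 f7 : k) :
  pbw e0 e1 e2 e3 e4 e5 e6 e7 - pbw f0 f1 f2 f3 f4 f5 f6 f7 =
  pbw (e0 - f0) (e1 - f1) (e2 - f2) (e3 - f3) (e4 - f4) (e5 - f5) (e6 - f6) (e7 - f7) :> Alg.
Proof. by apply/ffunP => -[[[] []] []]; rewrite !ffunE. Qed.

Lemma pbwZ (c e0 e1 e2 e3 e4 e5 e6 e7 : k) :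
  sc c (pbw e0 e1 e2 e3 e4 e5 e6 e7) =
  pbw (c * e0) (c * e1) (c * e2) (c * e3) (c * e4) (c * e5) (c * e6) (c * e7).
Proof. by apply/ffunP => -[[[] []] []]; rewrite !ffunE. Qed.

Lemma bas_pbw t : bas k t = match t with
  | (false, false, false) => pbw 1 0 0 0 0 0 0 0 | (false, false, true) => pbw 0 1 0 0 0 0 0 0
  | (false, true, false) => pbw 0 0 1 0 0 0 0 0 | (false, true, true) => pbw 0 0 0 1 0 0 0 0
  | (true, false, false) => pbw 0 0 0 0 1 0 0 0 | (true, false, true) => pbw 0 0 0 0 0 1 0 0
  | (true, true, false) => pbw 0 0 0 0 0 0 1 0 | (true, true, true) => pbw 0 0 0 0 0 0 0 1 end.
Proof. by case: t => [[[] []] []]; apply/ffunP => -[[[] []] []]; rewrite !ffunE. Qed.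

Lemma mulA_pbw (e0 e1 e2 e3 e4 e5 e6 e7 f0 f1 f2 f3 f4 f5 f6 f7 : k) :
  mulA (pbw e0 e1 e2 e3 e4 e5 e6 e7) (pbw f0 f1 f2 f3 f4 f5 f6 f7) =
  pbw (e0 * f0 + e4 * f4)
      (e0 * f1 + e1 * f0 + e4 * f5 - e5 * f4)
      (e0 * f2 + e2 * f0 + e4 * f6 - e6 * f4)
      (e0 * f3 - e1 * f2 + e2 * f1 + e3 * f0 + e4 * f7 + e5 * f6 - e6 * f5 + e7 * f4)
      (e0 * f4 + e4 * f0)
      (e0 * f5 - e1 * f4 + e4 * f1 + e5 * f0)
      (e0 * f6 - e2 * f4 + e4 * f2 + e6 * f0)
      (e0 * f7 + e1 * f6 - e2 * f5 + e3 * f4 + e4 * f3 - e5 * f2 + e6 * f1 + e7 * f0).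
Proof.
apply/ffunP => r; rewrite /mulA sum_ffunE big_idx !sum_ffunE !big_idx !scE /bmul /=.
by case: r => [[[] []] []]; rewrite /= ?ffunE /=; ring.
Qed.

End Coordinates.

Section Coproduct.
Variable k : fieldType.
Local Notation Alg := {ffun idx -> k}.
Local Notation Alg2 := {ffun (idx * idx) -> k}.

Lemma tensDl (u v w : Alg) : tens (u + v) w = tens u w + tens v w.
Proof. by apply/ffunP => p; rewrite !ffunE mulrDl. Qed.

Lemma tensDr (u v w : Alg) : tens u (v + w) = tens u v + tens u w.
Proof. by apply/ffunP => p; rewrite !ffunE mulrDr. Qed.

Lemma tensZl c (u v : Alg) : tens (sc c u) v = sc c (tens u v).
Proof. by apply/ffunP => p; rewrite !ffunE mulrA. Qed.

Lemma tensZr c (u v : Alg) : tens u (sc c v) = sc c (tens u v).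
Proof. by apply/ffunP => p; rewrite !ffunE mulrCA. Qed.

Lemma tens0l (v : Alg) : tens 0 v = 0.
Proof. by apply/ffunP => p; rewrite !ffunE mul0r. Qed.

Lemma tens0r (u : Alg) : tens u 0 = 0.
Proof. by apply/ffunP => p; rewrite !ffunE mulr0. Qed.

Lemma mul2Dl (U V W : Alg2) : mul2 (U + V) W = mul2 U W + mul2 V W.
Proof.
apply/ffunP => r; rewrite !ffunE !sum_ffunE -big_split; apply: eq_bigr => p _.
by rewrite !sum_ffunE -big_split; apply: eq_bigr => q _; rewrite !ffunE !mulrDl.
Qed.

Lemma mul2Dr (U V W : Alg2) : mul2 U (V + W) = mul2 U V + mul2 U W.
Proof.
apply/ffunP => r; rewrite !ffunE !sum_ffunE -big_split; apply: eq_bigr => p _.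
by rewrite !sum_ffunE -big_split; apply: eq_bigr => q _; rewrite !ffunE mulrDr !mulrDl.
Qed.

Lemma mul2Zl c (U V : Alg2) : mul2 (sc c U) V = sc c (mul2 U V).
Proof.
apply/ffunP => r; rewrite !ffunE !sum_ffunE mulr_sumr; apply: eq_bigr => p _.
by rewrite !sum_ffunE mulr_sumr; apply: eq_bigr => q _; rewrite !ffunE; ring.
Qed.

Lemma mul2Zr c (U V : Alg2) : mul2 U (sc c V) = sc c (mul2 U V).
Proof.
apply/ffunP => r; rewrite !ffunE !sum_ffunE mulr_sumr; apply: eq_bigr => p _.
by rewrite !sum_ffunE mulr_sumr; apply: eq_bigr => q _; rewrite !ffunE; ring.
Qed.

Lemma mul20l (V : Alg2) : mul2 0 V = 0.
Proof.
apply/ffunP => r; rewrite !ffunE sum_ffunE big1 // => p _.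
by rewrite sum_ffunE big1 // => q _; rewrite !ffunE !mul0r.
Qed.

Lemma mul20r (U : Alg2) : mul2 U 0 = 0.
Proof.
apply/ffunP => r; rewrite !ffunE sum_ffunE big1 // => p _.
by rewrite sum_ffunE big1 // => q _; rewrite !ffunE mulr0 mul0r.
Qed.

Lemma natr_eq_pair (s1 s2 t1 t2 : idx) :
  (s1 == t1)%:R * (s2 == t2)%:R = ((s1, s2) == (t1, t2))%:R :> k.
Proof. by rewrite -natrM mulnb. Qed.

Lemma mul2_tens_bas s1 s2 t1 t2 :
  mul2 (tens (bas k s1) (bas k s2)) (tens (bas k t1) (bas k t2)) =
  tens (bmul k s1 t1) (bmul k s2 t2).
Proof.
rewrite /mul2 (big_sc_single2 (i0 := (s1, s2)) (j0 := (t1, t2))) => [|[p1 p2]|[q1 q2]];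
  by rewrite !ffunE /= ?eqxx ?mulr1 ?sc1 // natr_eq_pair => /negbTE ->.
Qed.

Lemma Delta_bas t : Delta (bas k t) = DeltaB k t.
Proof.
by rewrite /Delta (big_sc_single (i0 := t)) => [|s]; rewrite ffunE ?eqxx ?sc1 // => /negbTE ->.
Qed.

Lemma big_scDl (U V : Alg2) (F : idx * idx -> Alg) :
  \sum_p sc ((U + V) p) (F p) = \sum_p sc (U p) (F p) + \sum_p sc (V p) (F p).
Proof.
by rewrite -big_split; apply: eq_bigr => p _; apply/ffunP => r; rewrite !ffunE mulrDl.
Qed.

Lemma big_scZl c (U : Alg2) (F : idx * idx -> Alg) :
  \sum_p sc ((sc c U) p) (F p) = sc c (\sum_p sc (U p) (F p)).
Proof.
apply/ffunP => r; rewrite ffunE !sum_ffunE mulr_sumr; apply: eq_bigr => p _.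
by rewrite !ffunE mulrA.
Qed.

Lemma big_sc0l (F : idx * idx -> Alg) : \sum_p sc ((0 : Alg2) p) (F p) = 0.
Proof. by apply: big1 => p _; rewrite ffunE sc0. Qed.

Lemma big_sc_tens_bas s t (F : idx * idx -> Alg) :
  \sum_p sc (tens (bas k s) (bas k t) p) (F p) = F (s, t).
Proof.
rewrite (big_sc_single (i0 := (s, t))) => [|[p1 p2]];
  by rewrite !ffunE /= ?eqxx ?mulr1 ?sc1 // natr_eq_pair => /negbTE ->.
Qed.

(* The Sweedler sum of F over the coproduct of the basis element t. *)
Definition sweedler (t : idx) (F : idx * idx -> Alg) : Alg :=
  let o := (false, false, false) in let g := (true, false, false) in
  let x := (false, true, false) in let y := (false, false, true) in
  let xy := (false, true, true) in let gx := (true, true, false) in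
  let gy := (true, false, true) in let gxy := (true, true, true) in
  match t with
  | (false, false, false) => F (o, o)
  | (false, false, true) => F (o, y) + F (y, g)
  | (false, true, false) => F (o, x) + F (x, g)
  | (false, true, true) => F (o, xy) - F (y, gx) + F (x, gy) + F (xy, o)
  | (true, false, false) => F (g, g)
  | (true, false, true) => F (g, gy) + F (gy, o)
  | (true, true, false) => F (g, gx) + F (gx, o)
  | (true, true, true) => F (g, gxy) - F (gy, x) + F (gx, y) + F (gxy, g)
  end.

Lemma big_sc_DeltaB t F : \sum_p sc (DeltaB k t p) (F p) = sweedler t F.
Proof.
case: t => [[[] []] []]; rewrite /DeltaB /pow2 /= /one2 /gA /xA /yA /oneA;
do 4 (rewrite ?(mul2_tens_bas, tensDl, tensDr, mul2Dl, mul2Dr, tensZl, tensZr,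
   tens0l, tens0r, mul20l, mul20r, mul2Zl, mul2Zr, scr0, scDr, addr0, add0r, scA);
   rewrite /bmul /=);
rewrite !(big_scDl, big_scZl, big_sc0l, big_sc_tens_bas) /=;
by apply/ffunP => r; rewrite !ffunE; ring.
Qed.

End Coproduct.

Section AntipodeAndTau.
Variables (k : fieldType) (T : 'M[k]_2).
Local Notation Alg := {ffun idx -> k}.
Local Notation a := (T 0 0).
Local Notation b := (T 0 1).
Local Notation c := (T 1 0).
Local Notation d := (T 1 1).

Lemma SB_pbw t : SB k t = match t with
  | (false, false, false) => pbw 1 0 0 0 0 0 0 0 | (false, false, true) => pbw 0 0 0 0 0 1 0 0
  | (false, true, false) => pbw 0 0 0 0 0 0 1 0 | (false, true, true) => pbw 0 0 0 1 0 0 0 0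
  | (true, false, false) => pbw 0 0 0 0 1 0 0 0 | (true, false, true) => pbw 0 (-1) 0 0 0 0 0 0
  | (true, true, false) => pbw 0 0 (-1) 0 0 0 0 0 | (true, true, true) => pbw 0 0 0 0 0 0 0 1 end.
Proof.
case: t => [[[] []] []]; rewrite /SB /powA /= /gA /xA /yA /oneA;
  by rewrite !(bas_pbw, pbwZ, pbwD, mulA_pbw) /=; congr pbw; ring.
Qed.

Lemma SA_pbw (e0 e1 e2 e3 e4 e5 e6 e7 : k) :
  SA (pbw e0 e1 e2 e3 e4 e5 e6 e7) = pbw e0 (- e5) (- e6) e3 e4 e1 e2 e7.
Proof. by rewrite /SA big_idx !SB_pbw !ffunE /= !pbwZ !pbwD; congr pbw; ring. Qed.

Lemma tauB_pbw t : tauB T t = match t with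
  | (false, false, false) => pbw 1 0 0 0 0 0 0 0 | (false, false, true) => pbw 0 d c 0 0 0 0 0
  | (false, true, false) => pbw 0 b a 0 0 0 0 0
  | (false, true, true) => pbw 0 0 0 (a * d - b * c) 0 0 0 0
  | (true, false, false) => pbw 0 0 0 0 1 0 0 0 | (true, false, true) => pbw 0 0 0 0 0 d c 0
  | (true, true, false) => pbw 0 0 0 0 0 b a 0
  | (true, true, true) => pbw 0 0 0 0 0 0 0 (a * d - b * c) end.
Proof.
case: t => [[[] []] []]; rewrite /tauB /powA /= /gA /xA /yA /oneA;
  by rewrite !(bas_pbw, pbwZ, pbwD, mulA_pbw) /=; congr pbw; ring.
Qed.

Lemma tauA_pbw (e0 e1 e2 e3 e4 e5 e6 e7 : k) :
  tauA T (pbw e0 e1 e2 e3 e4 e5 e6 e7) =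
  pbw e0 (e1 * d + e2 * b) (e1 * c + e2 * a) (e3 * (a * d - b * c))
      e4 (e5 * d + e6 * b) (e5 * c + e6 * a) (e7 * (a * d - b * c)).
Proof. by rewrite /tauA big_idx !tauB_pbw !ffunE /= !pbwZ !pbwD; congr pbw; ring. Qed.

Lemma Ptau_succ n t (G P : idx -> Alg) :
    (forall s, tauPow T n.+1 (bas k s) = G s) -> (forall s, Ptau T n (bas k s) = P s) ->
  Ptau T n.+1 (bas k t) = sweedler t (fun p => mulA (G p.1) (P p.2)).
Proof.
move=> tauG PnP; rewrite -big_sc_DeltaB -Delta_bas.
transitivity (\sum_p sc (Delta (bas k t) p)
                 (mulA (tauPow T n.+1 (bas k p.1)) (Ptau T n (bas k p.2)))) => //.
by apply: eq_bigr => p _; rewrite tauG PnP.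
Qed.

End AntipodeAndTau.

Section ClosedForms.
Variables (k : fieldType) (T : 'M[k]_2).
Local Notation Alg := {ffun idx -> k}.
Local Notation a := (T 0 0).
Local Notation b := (T 0 1).
Local Notation c := (T 1 0).
Local Notation d := (T 1 1).

(* [Ptau T (2n)] and [Ptau T (2n+1)] on the basis when tau^2 = 1; [Podd 0] is
   [Ptau T 1] for every tau. *)
Definition Peven (n : nat) (t : idx) : Alg :=
  let N : k := n%:R in let D := a * d - b * c in
  match t with
  | (false, false, false) => pbw 1 0 0 0 0 0 0 0
  | (false, false, true) => pbw 0 (N * d) (N * c) 0 0 (- N) 0 0
  | (false, true, false) => pbw 0 (N * b) (N * a) 0 0 0 (- N) 0
  | (false, true, true) => pbw 0 0 0 (N * N * (1 + D)) 0 0 0 (- (N * N * (a + d)))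
  | (true, false, false) => pbw 1 0 0 0 0 0 0 0
  | (true, false, true) => pbw 0 (N * d) (N * c) 0 0 N 0 0
  | (true, true, false) => pbw 0 (N * b) (N * a) 0 0 0 N 0
  | (true, true, true) => pbw 0 0 0 (N * N * (1 + D)) 0 0 0 (N * N * (a + d))
  end.

Definition Podd (n : nat) (t : idx) : Alg :=
  let N : k := n%:R in let D := a * d - b * c in
  match t with
  | (false, false, false) => pbw 1 0 0 0 0 0 0 0
  | (false, false, true) => pbw 0 ((N + 1) * d) ((N + 1) * c) 0 0 (- N) 0 0
  | (false, true, false) => pbw 0 ((N + 1) * b) ((N + 1) * a) 0 0 0 (- N) 0
  | (false, true, true) =>
      pbw 0 0 0 (N * N + (N + 1) * (N + 1) * D) 0 0 0 (- (N * (N + 1) * (a + d)))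
  | (true, false, false) => pbw 0 0 0 0 1 0 0 0
  | (true, false, true) => pbw 0 N 0 0 0 ((N + 1) * d) ((N + 1) * c) 0
  | (true, true, false) => pbw 0 0 N 0 0 ((N + 1) * b) ((N + 1) * a) 0
  | (true, true, true) =>
      pbw 0 0 0 (N * (N + 1) * (a + d)) 0 0 0 (N * N + (N + 1) * (N + 1) * D)
  end.

Lemma Ptau0 t : Ptau T 0 (bas k t) = Peven 0 t.
Proof.
by case: t => [[[] []] []]; rewrite /= /epsA /oneA !bas_pbw !ffunE /= pbwZ; congr pbw; ring.
Qed.

Lemma Ptau_odd n :
    (forall u, tauPow T (n.*2).+1 u = tauA T u) ->
    (forall t, Ptau T n.*2 (bas k t) = Peven n t) ->
  forall t, Ptau T (n.*2).+1 (bas k t) = Podd n t.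
Proof.
move=> tau_odd Pn t; rewrite (Ptau_succ t (fun s => tau_odd (bas k s)) Pn).
case: t => [[[] []] []]; rewrite /sweedler /= !bas_pbw !tauA_pbw /=;
  by rewrite !(pbwD, pbwB, mulA_pbw); congr pbw; ring.
Qed.

Lemma Ptau_even n :
    (forall u, tauPow T (n.*2).+2 u = u) ->
    (forall t, Ptau T (n.*2).+1 (bas k t) = Podd n t) ->
  forall t, Ptau T (n.+1).*2 (bas k t) = Peven n.+1 t.
Proof.
move=> tau_even Pn t; rewrite doubleS (Ptau_succ t (fun s => tau_even (bas k s)) Pn).
case: t => [[[] []] []]; rewrite /sweedler /= !bas_pbw /=;
  by rewrite !(pbwD, pbwB, mulA_pbw) ?mulrSr; congr pbw; ring.
Qed.

End ClosedForms.

Section Involutive.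
Variables (k : fieldType) (T : 'M[k]_2).
Hypothesis tau_invol : forall u, tauA T (tauA T u) = u.

Lemma tauPow_double n u : tauPow T n.*2 u = u.
Proof.
by elim: n => // n IH; rewrite doubleS /tauPow !iterS -/(tauPow T n.*2 u) IH tau_invol.
Qed.

Lemma Ptau_invol n :
  (forall t, Ptau T n.*2 (bas k t) = Peven T n t) /\
  (forall t, Ptau T (n.*2).+1 (bas k t) = Podd T n t).
Proof.
have tau_odd m u : tauPow T (m.*2).+1 u = tauA T u.
  by rewrite /tauPow iterSr -/(tauPow T _ _) tauPow_double.
have tau_even m u : tauPow T (m.*2).+2 u = u by rewrite -doubleS tauPow_double.
elim: n => [|n [_ Podd_n]].
  by split; [exact: Ptau0 | exact: Ptau_odd (tau_odd 0) (Ptau0 T)].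
have Peven_n1 := Ptau_even (tau_even n) Podd_n.
by split; [exact: Peven_n1 | exact: Ptau_odd (tau_odd n.+1) Peven_n1].
Qed.

Lemma nu_double n : nu (n.+1).*2 T = 2%:R * (n.+1)%:R ^+ 2 * (1 + \det T).
Proof.
have [_ Podd_val] := Ptau_invol n.
rewrite /nu /traceA doubleS succnK big_idx !Podd_val /= !SA_pbw !ffunE /= det_mx2 mulrSr.
ring.
Qed.

End Involutive.

Lemma nu3E (k : fieldType) (T : 'M[k]_2) :
  nu 3 T = (\tr T + \det T) ^+ 2 + (\tr T + 1) * (1 - \det T).
Proof.
have P1 := Ptau_odd (n := 0) (fun u => erefl) (Ptau0 T).
have P2 t := Ptau_succ (n := 1) t (fun s => erefl (tauA T (tauA T (bas k s)))) P1.
rewrite /nu /traceA big_idx !P2 /sweedler /= !bas_pbw.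
rewrite !(tauA_pbw, mulA_pbw, pbwD, pbwB) !SA_pbw !ffunE /= det_mx2 mxtrace_mx2.
ring.
Qed.

Section Order3.
Variables (k : fieldType) (T : 'M[k]_2).

Definition linA (v : 'rV[k]_2) : {ffun idx -> k} := pbw 0 (v 0 1) (v 0 0) 0 0 0 0 0.

Lemma linA_inj : injective linA.
Proof.
move=> v w /ffunP vw; apply/rowP => j.
case: (ord2P j) => ->; [move: (vw (false, true, false)) | move: (vw (false, false, true))];
  by rewrite !ffunE.
Qed.

Lemma tauA_linA v : tauA T (linA v) = linA (v *m T).
Proof. by rewrite /linA tauA_pbw !mxE !big_ord2; congr pbw; ring. Qed.

Lemma tauPow_linA n v : tauPow T n (linA v) = linA (v *m T ^+ n).
Proof.
elim: n => [|n IH]; first by rewrite expr0 mulmx1.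
by rewrite /tauPow iterS -/(tauPow T n _) IH tauA_linA exprSr -mulmxE mulmxA.
Qed.

Lemma tau_cube_mx : (forall u, tauA T (tauA T (tauA T u)) = u) -> T ^+ 3 = 1.
Proof.
move=> tau3; apply/row_matrixP => i; rewrite !rowE mulmx1.
by apply: linA_inj; rewrite -tauPow_linA; exact: tau3.
Qed.

End Order3.

Theorem proposition6p2 (k : closedFieldType) (Hchar : [pchar k] =i pred0)
    (T : 'M[k]_2) (HT : T \in unitmx) :
  ((forall u : {ffun idx -> k}, tauA T (tauA T u) = u) ->
   forall m : nat, (0 < m)%N -> ~~ odd m ->
     [/\ nu m T = (m ^ 2)%:R / 2%:R * (1 + \det T),
         \det T = 1 -> nu m T = (m ^ 2)%:R
       & \det T = -1 -> nu m T = 0]) /\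
  ((forall u : {ffun idx -> k}, tauA T (tauA T (tauA T u)) = u) ->
   [/\ nu 3 T = (\tr T + \det T) ^+ 2 + (\tr T + 1) * (1 - \det T),
       T = 1%:M -> nu 3 T = 9%:R
     & T != 1%:M -> nu 3 T = 0]).
Proof.
have two_neq0 : 2%:R != 0 :> k by rewrite (pcharf0P _).1.
split=> [tau_invol m m_gt0 m_even | tau_cube].
  have [n ->] : exists n, m = n.+1.*2.
    case m_half: m./2 => [|n]; last by exists n; rewrite -m_half (even_halfK m_even).
    by move: m_gt0; rewrite -(even_halfK m_even) m_half.
  have nuE : nu n.+1.*2 T = ((n.+1.*2) ^ 2)%:R / 2%:R * (1 + \det T).
    by rewrite nu_double // -muln2 natrX natrM; field.
  by split=> // det_val; rewrite nuE det_val; [field | rewrite addrN mulr0].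
rewrite nu3E; split=> // [-> | T_neq1].
  by rewrite mxtrace1 det1; ring.
exact: mx2_cube1_neq1 (tau_cube_mx tau_cube) T_neq1.
Qed.
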